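(* Let $\delta>0$ and let $\mathcal{G}$ be a class of graphs, each of average degree at least $2+\delta$, such that the girth of graphs in $\mathcal{G}$ is unbounded. Then $\mathcal{G}$ is not fractionally-$\mathrm{tw}$-fragile.
   Context: A distribution $\pi$ over subsets of $V$ is $\varepsilon$-thin if $\Pr_{X\sim\pi}[v\in X]\le\varepsilon$ for every $v\in V$. A class $\mathcal{G}$ of graphs is fractionally-$\mathrm{tw}$-fragile if for every $\varepsilon>0$ there is $k$ such that every $G\in\mathcal{G}$ has an $\varepsilon$-thin distribution over sets $X\subseteq V(G)$ with $\mathrm{tw}(G-X)\le k$, where $\mathrm{tw}$ is treewidth. *)

From HB Require Import structures.
From mathcomp Require Import all_boot all_order all_algebra.
From mathcomp Require Import reals.
Set Implicit Arguments. Unset Strict Implicit. Unset Printing Implicit Defensive.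
Import Order.TTheory GRing.Theory Num.Theory.
Local Open Scope ring_scope.

Record sgraph := SGraph {
  vert :> finType;
  adj : rel vert;
  adj_sym : symmetric adj;
  adj_irr : irreflexive adj }.

Section Induced.
Variables (G : sgraph) (S : {set G}).
Definition ind_vert : finType := {x : G | x \in S}.
Definition ind_adj : rel ind_vert := fun x y => adj (val x) (val y).
Lemma ind_adj_sym : symmetric ind_adj.
Proof. by move=> x y; rewrite /ind_adj adj_sym. Qed.
Lemma ind_adj_irr : irreflexive ind_adj.
Proof. by move=> x; rewrite /ind_adj adj_irr. Qed.
Definition induced : sgraph := SGraph ind_adj_sym ind_adj_irr.
End Induced.

Definition del_vert (G : sgraph) (X : {set G}) : sgraph := induced (~: X).

Definition is_tree (I : finType) (te : rel I) : Prop :=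
  symmetric te /\ irreflexive te /\
  (forall i j : I, connect te i j) /\
  (forall c : seq I, ucycle te c -> (size c < 3)%N).

Definition tree_decomp_width_le (G : sgraph) (I : finType) (te : rel I)
  (B : I -> {set G}) (k : nat) : Prop :=
  is_tree te /\
  (forall v : G, exists i, v \in B i) /\
  (forall u v : G, adj u v -> exists i, (u \in B i) && (v \in B i)) /\
  (forall (v : G) (i j : I), v \in B i -> v \in B j ->
      connect [rel a b | [&& te a b, v \in B a & v \in B b]] i j) /\
  (forall i, (#|B i| <= k.+1)%N).

Definition tw_le (G : sgraph) (k : nat) : Prop :=
  exists (I : finType) (te : rel I) (B : I -> {set G}),
    tree_decomp_width_le te B k.

Definition thin_tw_distribution (R : realType) (G : sgraph) (eps : R) (k : nat)
  : Prop :=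
  exists p : {set G} -> R,
    (forall X, 0 <= p X) /\
    (\sum_(X : {set G}) p X = 1) /\
    (forall v : G, \sum_(X : {set G} | v \in X) p X <= eps) /\
    (forall X, 0 < p X -> tw_le (del_vert X) k).

Definition frac_tw_fragile (R : realType) (C : sgraph -> Prop) : Prop :=
  forall eps : R, 0 < eps -> exists k : nat,
    forall G, C G -> thin_tw_distribution G eps k.

Definition deg (G : sgraph) (v : G) : nat := #|[set w | adj v w]|.

(* average degree 2|E|/|V| = (sum of degrees)/|V| *)
Definition avg_degree (R : realType) (G : sgraph) : R :=
  (\sum_(v : G) deg v)%:R / (#|G|)%:R.

(* girth(G) >= n : every cycle has length at least n (forests have girth oo) *)
Definition girth_ge (G : sgraph) (n : nat) : Prop :=
  forall c : seq G, ucycle (@adj G) c -> (3 <= size c)%N -> (n <= size c)%N.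

From HB Require Import structures.
From mathcomp Require Import all_boot all_order all_algebra.
From mathcomp Require Import reals.
From mathcomp Require Import zify ring lra.
Set Implicit Arguments. Unset Strict Implicit. Unset Printing Implicit Defensive.

(* Take k for eps = delta / (4 (2 + delta)) and m with delta m > 4 (k + 1).  In a graph
   of treewidth at most k and girth above 2m + 3k + 3, every vertex set A spans at most
   |A| (m + k + 1) / m edges.  Indeed, cutting the tree decomposition at a suitable node t
   yields a union W of branches of size between m + k + 1 and 2m + 3k + 2 such that
   Q = W minus the bag of t has at least m vertices and all the A-neighbours of Q in W;
   W is a forest, so deleting Q from A loses at most |Q| + k edges, and we induct.
   Applied to G - X for X in the support of an eps-thin distribution, this bounds the
   degree sum D of G by 2 |G| (m + k + 1) / m plus twice the degree sum of X, whose
   expectation is at most eps D.  Hence D (4 + delta) / (2 (2 + delta)) < |G| (4 + delta) / 2,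
   contradicting D >= (2 + delta) |G|. *)

Section AvoidingPaths.
Variable T : finType.
Implicit Types (r : rel T) (P : pred T).

Definition avoid r (s : T) : rel T := [rel a b | r a b && (a != s) && (b != s)].

Lemma avoid_sym r s : symmetric r -> symmetric (avoid r s).
Proof. by move=> r_sym a b; rewrite /avoid /= r_sym andbAC. Qed.

Lemma path_avoid_all r s x p : path (avoid r s) x p -> all (predC1 s) p.
Proof.
elim: p x => [//|y p IH] x /= /andP [/andP [_ ys] y_p].
by rewrite ys /=; apply: IH y_p.
Qed.

Lemma path_first_entry r t x q : path r x q -> last x q = t -> x != t ->
  exists2 u, r u t & connect (avoid r t) x u.
Proof.
elim: q x => [|y q IH] x /=; first by move=> _ -> /eqP.
move=> /andP [rxy y_q] y_q_t xt.
have [yt|yt] := eqVneq y t; first by exists x; [rewrite -yt | exact: connect0].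
have [u rut cyu] := IH y y_q y_q_t yt.
by exists u => //; apply: connect_trans cyu; apply: connect1; rewrite /avoid /= rxy xt yt.
Qed.

Lemma connect_avoid_neighbor r t x : symmetric r -> connect r t x -> x != t ->
  exists2 u, r t u & connect (avoid r t) u x.
Proof.
move=> r_sym; rewrite (sym_connect_sym r_sym) => /connectP [q x_q t_q] xt.
have [u rut cxu] := path_first_entry x_q (esym t_q) xt.
by exists u; rewrite 1?r_sym // (sym_connect_sym (avoid_sym t r_sym)).
Qed.

Lemma connect_exit_edge r P a b : connect r a b -> P a -> ~~ P b ->
  exists x y, [/\ r x y, P x & ~~ P y].
Proof.
case/connectP => p + ->; elim: p a => [|y p IH] a /=; first by move=> _ ->.
move=> /andP [ray y_p] Pa Pb.
have [Py|nPy] := boolP (P y); first exact: IH y_p Py Pb.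
by exists a, y.
Qed.

End AvoidingPaths.

Section TreeBranches.
Variables (T : finType) (e : rel T).
Hypotheses (e_sym : symmetric e) (e_irr : irreflexive e).
Hypothesis e_acyc : forall c : seq T, ucycle e c -> size c < 3.

Definition branch s t := [set x | connect (avoid e s) t x].

Lemma edge_neq x y : e x y -> x != y.
Proof. by apply: contraTneq => ->; rewrite e_irr. Qed.

Lemma branch_root s t : t \in branch s t.
Proof. by rewrite inE connect0. Qed.

Lemma branch_notin s t : s != t -> s \notin branch s t.
Proof.
move=> st; rewrite inE; apply/negP => /connectP [p].
case/lastP: p => [_ /= ts|p z]; first by rewrite ts eqxx in st.
rewrite rcons_path last_rcons => /andP [_ /andP [_ zs]] sz.
by rewrite sz eqxx in zs.
Qed.

Lemma branch_exit s t x y : s != t -> x \in branch s t -> y \notin branch s t ->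
  e x y -> y = s.
Proof.
move=> st x_in y_out exy; apply/eqP; apply: contraNT y_out => ys.
have xs : x != s by apply: contraTneq x_in => ->; apply: branch_notin.
move: x_in; rewrite !inE => /connect_trans; apply.
by apply: connect1; rewrite /avoid /= exy xs ys.
Qed.

(* Two neighbours of [t] joined away from [t] would close a cycle through [t]. *)
Lemma neighbors_disconnected t u s : e t u -> e t s -> u != s ->
  ~~ connect (avoid e t) u s.
Proof.
move=> etu ets us; apply/negP => /connectP [p u_p s_p].
case: (shortenP u_p) s_p => p' u_p' uniq_p' _ s_p'.
have e_p' : path e u p' by apply: sub_path u_p' => a b /andP [/andP []].
have t_p' : all (predC1 t) p' := path_avoid_all u_p'.
case: p' u_p' uniq_p' s_p' e_p' t_p' => [_ _ /= su|z p' _ uniq_p' s_p' e_p' t_p'].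
  by rewrite su eqxx in us.
move: e_p' s_p' => /= /andP [euz e_p'] s_last.
suff /e_acyc : ucycle e [:: t, u, z & p'] by [].
apply/andP; split.
  by rewrite /cycle /= etu euz rcons_path e_p' -s_last e_sym ets.
rewrite cons_uniq uniq_p' andbT inE negb_or (edge_neq etu) /=.
by apply/negP => /(allP t_p') /=; rewrite eqxx.
Qed.

Lemma branch_sub s t u : e s t -> e t u -> u != s -> branch t u \subset branch s t.
Proof.
move=> est etu us; apply/subsetP => x; rewrite !inE => /connectP [p u_p ->].
have ts : t != s by rewrite eq_sym (edge_neq est).
have s_up : all (predC1 s) (u :: p).
  apply/allP => y /(path_connect u_p) cuy /=; apply: contraTneq cuy => ->.
  by apply: neighbors_disconnected etu _ us; rewrite e_sym.
have u_p_s : path (avoid e s) u p.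
  apply: sub_in_path s_up u_p => a b /[!inE] a_s b_s /andP [/andP [eab _] _].
  by rewrite /avoid /= eab a_s b_s.
apply: connect_trans (connect1 (_ : avoid e s t u)) _.
  by rewrite /avoid /= etu ts us.
by apply/connectP; exists p.
Qed.

Lemma branch_card_lt s t u : e s t -> e t u -> u != s ->
  #|branch t u| < #|branch s t|.
Proof.
move=> est etu us; rewrite (cardsD1 t (branch s t)) branch_root ltnS.
apply/subset_leq_card/subsetP => x x_in; rewrite in_setD1 (subsetP (branch_sub est etu us)) //.
by rewrite andbT; apply: contraTneq x_in => ->; apply/branch_notin/edge_neq.
Qed.

(* Move along edges satisfying [P] away from [s]; the branch shrinks at each step. *)
Lemma extremal_edge (P : T -> T -> bool) s t : e s t -> P s t ->
  exists s' t', [/\ e s' t', P s' t' & forall u, e t' u -> u != s' -> ~~ P t' u].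
Proof.
move: {2}#|branch s t| (leqnn #|branch s t|) => n.
elim: n s t => [|n IH] s t le_n est Pst.
  by move: le_n (branch_root s t); rewrite leqn0 cards_eq0 => /eqP ->; rewrite inE.
have [/existsP [u /and3P [etu us Ptu]]|none] := boolP [exists u, [&& e t u, u != s & P t u]].
  by apply: (IH t u) => //; rewrite -ltnS; apply: leq_trans le_n; apply: branch_card_lt.
exists s, t; split => // u etu us; apply/negP => Ptu.
by case/negP: none; apply/existsP; exists u; rewrite etu us Ptu.
Qed.

End TreeBranches.

Section ArcCount.
Variables (T : finType) (r : rel T).
Hypotheses (r_sym : symmetric r) (r_irr : irreflexive r).

(* Twice the number of edges of the subgraph induced on [A]. *)
Definition arc_count (A : {set T}) : nat :=
  \sum_(x : T) \sum_(y : T) ((x \in A) && (y \in A) && r x y : nat).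

Lemma arc_count0 : arc_count set0 = 0.
Proof. by rewrite /arc_count big1 // => x _; rewrite big1 // => y _; rewrite inE. Qed.

Lemma sum_pair_indicator (a b : T) :
  \sum_(x : T) \sum_(y : T) ((x == a) && (y == b) : nat) = 1.
Proof.
rewrite (bigD1 a) //= [X in _ + X]big1 => [|x xa]; last first.
  by rewrite big1 // => y _; rewrite (negbTE xa).
rewrite addn0 (bigD1 b) //= !eqxx big1 // => y yb.
by rewrite (negbTE yb) andbF.
Qed.

Lemma arc_count_leaf (W : {set T}) s t : (forall y, y \in W -> r t y -> y = s) ->
  arc_count W <= arc_count (W :\ t) + 2.
Proof.
(* The two arcs lost are (t, s) and (s, t). *)
move=> leaf; rewrite -[2]/(1 + 1) -{1}(sum_pair_indicator t s) -(sum_pair_indicator s t).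
rewrite /arc_count -!big_split; apply: leq_sum => x _; rewrite -!big_split.
apply: leq_sum => y _.
case: (boolP ((x \in W) && (y \in W) && r x y)) => // /andP [/andP [xW yW] rxy].
have [xt|xt] := eqVneq x t.
  by rewrite (leaf y) -?xt // xt !eqxx /= addnC.
have [yt|yt] := eqVneq y t.
  by rewrite (leaf x) // 1?r_sym -?yt // yt !eqxx /= add0n addn1.
by rewrite !in_setD1 xt yt xW yW rxy.
Qed.

Lemma arc_count_cut (A Q W : {set T}) : Q \subset W ->
  (forall q y, q \in Q -> y \in A -> r q y -> y \in W) ->
  arc_count A <= arc_count (A :\: Q) + arc_count W.
Proof.
move=> QW Q_closed; rewrite /arc_count -big_split; apply: leq_sum => x _.
rewrite -big_split /=; apply: leq_sum => y _.
case: (boolP ((x \in A) && (y \in A) && r x y)) => // /andP [/andP [xA yA] rxy].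
have [xQ|xQ] := boolP (x \in Q).
  by rewrite (subsetP QW x xQ) (Q_closed x y) // rxy addn1.
have [yQ|yQ] := boolP (y \in Q).
  have ryx : r y x by rewrite r_sym.
  by rewrite (subsetP QW y yQ) (Q_closed y x yQ xA ryx) rxy addn1.
by rewrite !in_setD xQ yQ xA yA rxy.
Qed.

Lemma forest_has_leaf (W : {set T}) :
  (forall c, ucycle r c -> {subset c <= W} -> size c < 3) -> W != set0 ->
  exists2 t, t \in W & exists s, forall y, y \in W -> r t y -> y = s.
Proof.
move=> W_acyc /set0Pn [w wW].
pose rW := [rel a b | r a b && (a \in W) && (b \in W)].
have rW_sym : symmetric rW by move=> a b; rewrite /rW /= r_sym andbAC.
have rW_irr : irreflexive rW by move=> a; rewrite /rW /= r_irr.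
have rW_acyc : forall c, ucycle rW c -> size c < 3.
  move=> c /andP [rW_c uniq_c]; apply: W_acyc.
    by rewrite /ucycle uniq_c andbT; apply: sub_cycle rW_c => a b /andP [/andP []].
  by move=> x xc; have /andP [/andP [_ ->]] := next_cycle rW_c xc.
have [/existsP [s /existsP [t rst]]|no_edge] := boolP [exists s, exists t, rW s t].
  have [s' [t' [/andP [_ t'W] _ leaf]]] :=
    extremal_edge rW_sym rW_irr rW_acyc (P := fun _ _ => true) rst isT.
  exists t' => //; exists s' => y yW rt'y; apply/eqP; apply: contraTT isT => ys'.
  by apply: leaf ys'; rewrite /rW /= rt'y t'W yW.
exists w => //; exists w => y yW rwy.
by case/negP: no_edge; apply/existsP; exists w; apply/existsP; exists y; rewrite /rW /= rwy wW yW.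
Qed.

Lemma arc_count_forest (W : {set T}) :
  (forall c, ucycle r c -> {subset c <= W} -> size c < 3) -> arc_count W <= 2 * #|W|.
Proof.
move: {2}#|W| (leqnn #|W|) => n; elim: n W => [|n IH] W le_Wn W_acyc.
  by move: le_Wn; rewrite leqn0 cards_eq0 => /eqP ->; rewrite arc_count0.
have [->|W0] := eqVneq W set0; first by rewrite arc_count0.
have [t tW [s leaf]] := forest_has_leaf W_acyc W0.
have card_W : #|W| = #|W :\ t|.+1 by rewrite (cardsD1 t W) tW.
apply: leq_trans (arc_count_leaf leaf) _; rewrite card_W mulnS addnC leq_add2l.
apply: IH; first by rewrite -ltnS -card_W.
by move=> c c_cyc c_sub; apply: W_acyc c_cyc _ => x /c_sub /setD1P [].
Qed.

End ArcCount.

Lemma bigcup_card_window (I T : finType) (f : I -> {set T}) (L : seq I) M N :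
  0 < M -> (forall u, u \in L -> #|f u| < N) -> M <= #|\bigcup_(u <- L) f u| ->
  exists2 L', {subset L' <= L} & M <= #|\bigcup_(u <- L') f u| < M + N.
Proof.
move=> M_gt0; elim: L => [|u L IH] f_small L_big.
  by move: L_big; rewrite big_nil cards0 leqn0 => /eqP M0; rewrite M0 in M_gt0.
have [L_big'|L_small] := leqP M #|\bigcup_(u <- L) f u|.
  have [L' L'_sub L'_win] := IH (fun v vL => f_small v (mem_behead (s := u :: L) vL)) L_big'.
  by exists L' => // x /L'_sub xL; rewrite inE xL orbT.
exists (u :: L) => //; apply/andP; split => //.
rewrite big_cons; apply: leq_ltn_trans (leq_card_setU _ _).1 _.
have f_u_small := f_small u (mem_head _ _).
by rewrite -addSn addnC leq_add // ltnW.
Qed.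

Lemma small_set_acyclic (G : sgraph) g (W : {set G}) : girth_ge G g -> #|W| < g ->
  forall c, ucycle (@adj G) c -> {subset c <= W} -> size c < 3.
Proof.
move=> girth_G W_small c c_cyc c_sub; rewrite ltnNge; apply/negP => c3.
have c_W : size c <= #|W|.
  by rewrite -(card_uniqP (andP c_cyc).2); apply/subset_leq_card/subsetP.
by have := leq_trans (girth_G c c_cyc c3) c_W; rewrite leqNgt W_small.
Qed.

Section TreeDecomposition.
Variables (H : sgraph) (I : finType) (te : rel I) (B : I -> {set H}) (k : nat).
Hypothesis td : tree_decomp_width_le te B k.
Variables (m g : nat).
Hypothesis m_gt0 : 0 < m.
Let M := m + k + 1.
Let N := M + k + 1.
Hypothesis g_large : M + N < g.
Hypothesis H_girth : girth_ge H g.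

Local Notation arcs := (arc_count (@adj H)).

Let te_sym : symmetric te. Proof. by case: td => [[]]. Qed.
Let te_irr : irreflexive te. Proof. by case: td => [[_ []]]. Qed.
Let te_conn : forall i j, connect te i j. Proof. by case: td => [[_ [_ []]]]. Qed.
Let te_acyc : forall c, ucycle te c -> size c < 3. Proof. by case: td => [[_ [_ []]]]. Qed.
Let bag_cover_vert : forall v : H, exists i, v \in B i. Proof. by case: td => [_ []]. Qed.
Let bag_cover_edge : forall u v : H, adj u v -> exists i, (u \in B i) && (v \in B i).
Proof. by case: td => [_ [_ []]]. Qed.
Let bag_conn : forall (v : H) i j, v \in B i -> v \in B j ->
  connect [rel a b | [&& te a b, v \in B a & v \in B b]] i j.
Proof. by case: td => [_ [_ [_ []]]]. Qed.
Let bag_small : forall i, #|B i| <= k.+1. Proof. by case: td => [_ [_ [_ []]]]. Qed.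

Definition bag_union (X : {set I}) : {set H} := \bigcup_(x in X) B x.

Definition branch_part (A : {set H}) t u := A :&: bag_union (branch te t u).

Definition sparse_cut (A Q : {set H}) :=
  [/\ Q \subset A, m <= #|Q| & arcs A <= arcs (A :\: Q) + 2 * (#|Q| + k + 1)].

Lemma bag_branch_closed t u x y (q : H) : te t u -> x \in branch te t u ->
  q \in B x -> q \notin B t -> q \in B y -> y \in branch te t u.
Proof.
move=> etu x_in qx qt qy; apply: contraT => y_out.
have [a [b [/and3P [eab qa qb] a_in b_out]]] := connect_exit_edge (bag_conn qx qy) x_in y_out.
by move: qt; rewrite -(branch_exit (edge_neq te_irr etu) a_in b_out eab) qb.
Qed.

(* A vertex of the union [W] of branch parts lying outside the bag [B t] has all its
   [A]-neighbours in [W]; so every edge at the cut lies in [W], a forest by the girth bound. *)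
Lemma sparse_cut_of_window A t (L : seq I) : (forall u, u \in L -> te t u) ->
  M <= #|\bigcup_(u <- L) branch_part A t u| < M + N -> exists Q, sparse_cut A Q.
Proof.
move=> L_nbr /andP [W_big W_small].
set W := \bigcup_(u <- L) _ in W_big W_small.
have memW y : reflect (exists2 u, u \in L & y \in branch_part A t u) (y \in W).
  by rewrite /W bigcup_seq; apply: (iffP bigcupP) => [[u]|[u]]; exists u.
have W_A : W \subset A by apply/subsetP => y /memW [u _ /setIP []].
have card_W : #|W| <= #|W :\: B t| + k + 1.
  have := cardsID (B t) W; have := subset_leq_card (subsetIr W (B t)).
  have := bag_small t; lia.
have W_g : #|W| < g by apply: ltn_trans g_large.
exists (W :\: B t); split.
- by apply: subset_trans W_A; apply: subsetDl.
- by move: W_big card_W; rewrite /M; lia.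
apply: leq_trans (arc_count_cut (@adj_sym H) (subsetDl W (B t)) _) _.
  move=> q y /setDP [/memW [u uL /setIP [_ /bigcupP [x x_in qx]]] qt] yA qy.
  have [z /andP [qz yz]] := bag_cover_edge qy.
  apply/memW; exists u => //; rewrite inE yA; apply/bigcupP; exists z => //.
  exact: bag_branch_closed (L_nbr u uL) x_in qx qt qz.
rewrite leq_add2l.
have W_arcs := arc_count_forest (@adj_sym H) (@adj_irr H) (small_set_acyclic H_girth W_g).
apply: leq_trans W_arcs _.
by rewrite leq_mul2l card_W orbT.
Qed.

Lemma window_large (A S : {set H}) t (L : seq I) :
  S \subset B t :|: \bigcup_(u <- L) branch_part A t u -> N <= #|S| ->
  M <= #|\bigcup_(u <- L) branch_part A t u|.
Proof.
move=> S_sub S_big; have := subset_leq_card S_sub.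
have := (leq_card_setU (B t) (\bigcup_(u <- L) branch_part A t u)).1.
have := bag_small t; move: S_big; rewrite /N /M; lia.
Qed.

Lemma sparse_cut_of_neighbors A t (L : seq I) : (forall u, u \in L -> te t u) ->
  (forall u, u \in L -> #|branch_part A t u| < N) ->
  M <= #|\bigcup_(u <- L) branch_part A t u| -> exists Q, sparse_cut A Q.
Proof.
move=> L_nbr parts_small parts_big.
have M_gt0 : 0 < M by rewrite /M addn1.
have [L' L'_sub L'_win] := bigcup_card_window M_gt0 parts_small parts_big.
exact: sparse_cut_of_window (fun u uL' => L_nbr u (L'_sub u uL')) L'_win.
Qed.

Lemma bag_cover A t (L : seq I) (X : {set I}) :
  (forall x, x \in X -> x != t -> exists2 u, u \in L & x \in branch te t u) ->
  A :&: bag_union X \subset B t :|: \bigcup_(u <- L) branch_part A t u.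
Proof.
move=> X_cov; apply/subsetP => v /setIP [vA /bigcupP [x xX vx]].
have [xt|xt] := eqVneq x t; first by rewrite inE -xt vx.
have [u uL x_in] := X_cov x xX xt.
rewrite inE bigcup_seq; apply/orP; right; apply/bigcupP; exists u => //.
by rewrite inE vA; apply/bigcupP; exists x.
Qed.

(* Walk along the tree as long as some branch stays big; the branches hanging off
   the final node are then all small.  If no branch is big, any node will do. *)
Lemma exists_sparse_cut (A : {set H}) : N <= #|A| -> exists Q, sparse_cut A Q.
Proof.
move=> A_big.
have [/existsP [s /existsP [t /andP [est st_big]]]|no_big] :=
  boolP [exists s, exists t, te s t && (N <= #|branch_part A s t|)].
  have [s' [t' [_ big' small]]] :=
    extremal_edge te_sym te_irr te_acyc (P := fun s t => N <= #|branch_part A s t|) est st_big.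
  pose L := [seq u <- enum I | te t' u && (u != s')].
  apply: (sparse_cut_of_neighbors (t := t') (L := L)).
  - by move=> u; rewrite /L mem_filter => /andP [/andP []].
  - by move=> u; rewrite /L mem_filter ltnNge => /andP [/andP [et'u us'] _]; apply: small.
  apply: window_large big'; apply: bag_cover => x; rewrite inE => ct'x xt'.
  have [u /andP [/andP [et'u _] us'] cux] :=
    connect_avoid_neighbor (avoid_sym s' te_sym) ct'x xt'.
  exists u; first by rewrite /L mem_filter et'u us' mem_enum.
  rewrite inE; apply: connect_sub cux => a b /andP [/andP [/andP [/andP [eab _] _] at'] bt'].
  by apply: connect1; rewrite /avoid /= eab at' bt'.
have [v vA] : exists v, v \in A.
  by apply/card_gt0P; apply: leq_trans A_big; rewrite /N addn1.
have [t _] := bag_cover_vert v.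
pose L := [seq u <- enum I | te t u].
apply: (sparse_cut_of_neighbors (t := t) (L := L)).
- by move=> u; rewrite /L mem_filter => /andP [].
- move=> u; rewrite /L mem_filter ltnNge => /andP [etu _]; apply/negP => tu_big.
  by case/negP: no_big; apply/existsP; exists t; apply/existsP; exists u; rewrite etu tu_big.
apply: (window_large (S := A :&: bag_union setT)); last first.
  rewrite (setIidPl _) //; apply/subsetP => w _; have [x wx] := bag_cover_vert w.
  by apply/bigcupP; exists x.
apply: bag_cover => x _ xt; have [u etu cux] := connect_avoid_neighbor te_sym (te_conn t x) xt.
by exists u; rewrite ?inE // /L mem_filter etu mem_enum.
Qed.

Lemma arc_count_tw (A : {set H}) : arcs A * m <= 2 * #|A| * M.
Proof.
move: {2}#|A| (leqnn #|A|) => n; elim: n A => [|n IH] A le_An.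
  by move: le_An; rewrite leqn0 cards_eq0 => /eqP ->; rewrite arc_count0.
have [A_small|A_big] := ltnP #|A| N.
  have A_g : #|A| < g by apply: ltn_trans g_large; apply: leq_trans A_small (leq_addl _ _).
  have A_arcs := arc_count_forest (@adj_sym H) (@adj_irr H) (small_set_acyclic H_girth A_g).
  apply: leq_trans (leq_mul A_arcs (leqnn m)) _.
  by rewrite leq_mul2l /M -addnA leq_addr orbT.
have [Q [QA Q_big A_arcs]] := exists_sparse_cut A_big.
have Q_A : #|Q| <= #|A| := subset_leq_card QA.
have card_AQ : #|A :\: Q| = #|A| - #|Q| by rewrite cardsD (setIidPr QA).
have AQ_arcs : arcs (A :\: Q) * m <= 2 * (#|A| - #|Q|) * M.
  by rewrite -card_AQ; apply: IH; rewrite card_AQ; lia.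
have : (k + 1) * m <= (k + 1) * #|Q| by rewrite leq_mul2l Q_big orbT.
have := leq_mul A_arcs (leqnn m).
move: AQ_arcs Q_A; rewrite /M; nia.
Qed.

End TreeDecomposition.

Lemma girth_ge_del_vert (G : sgraph) (X : {set G}) g :
  girth_ge G g -> girth_ge (del_vert X) g.
Proof.
move=> girth_G c c_cyc c3.
have c_cyc' : ucycle (@adj G) (map val c).
  by rewrite /ucycle cycle_map map_inj_uniq; [exact: c_cyc | exact: val_inj].
by have := girth_G _ c_cyc'; rewrite size_map; apply.
Qed.

Lemma deg_sum_adj (G : sgraph) (v : G) : deg v = \sum_(w : G) (adj v w : nat).
Proof.
rewrite /deg -sum1_card big_mkcond /=; apply: eq_bigr => w _.
by rewrite inE; case: adj.
Qed.

Lemma degree_sum_le_del_vert (G : sgraph) (X : {set G}) :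
  \sum_(v : G) deg v <= arc_count (@adj (del_vert X)) setT + 2 * \sum_(v in X) deg v.
Proof.
have -> : arc_count (@adj (del_vert X)) setT =
    \sum_(v in ~: X) \sum_(w in ~: X) (adj v w : nat).
  symmetry; rewrite big_sub; apply: eq_bigr => v _.
  by rewrite big_sub; apply: eq_bigr => w _; rewrite !inE.
have -> : \sum_(v in ~: X) \sum_(w in ~: X) (adj v w : nat) =
    \sum_(v : G) \sum_(w : G) ((v \notin X) && (w \notin X) && adj v w : nat).
  rewrite big_mkcond /=; apply: eq_bigr => v _; rewrite big_mkcond /= inE.
  by case: (v \in X) => /=; [rewrite big1 | apply: eq_bigr => w _; rewrite inE; case: (w \in X)].
have deg_X : \sum_(v in X) deg v = \sum_(v : G) \sum_(w : G) ((v \in X) && adj v w : nat).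
  rewrite big_mkcond /=; apply: eq_bigr => v _; rewrite deg_sum_adj.
  by case: (v \in X) => //=; rewrite big1.
have deg_X' : \sum_(v in X) deg v = \sum_(v : G) \sum_(w : G) ((w \in X) && adj v w : nat).
  rewrite deg_X exchange_big /=; apply: eq_bigr => v _; apply: eq_bigr => w _.
  by rewrite adj_sym.
rewrite mul2n -addnn {1}deg_X deg_X' -!big_split /=; apply: leq_sum => v _.
rewrite deg_sum_adj -!big_split /=; apply: leq_sum => w _.
by case: (v \in X); case: (w \in X); case: adj.
Qed.

Lemma degree_sum_del_tw (G : sgraph) (X : {set G}) (k m g : nat) : 0 < m ->
  m + k + 1 + (m + k + 1 + k + 1) < g -> girth_ge G g -> tw_le (del_vert X) k ->
  (\sum_(v : G) deg v) * m <= 2 * #|G| * (m + k + 1) + 2 * (\sum_(v in X) deg v) * m.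
Proof.
move=> m_gt0 g_large girth_G [I [te [B td]]].
have := arc_count_tw td m_gt0 g_large (girth_ge_del_vert (X := X) girth_G) setT.
have := degree_sum_le_del_vert X.
have : #|[set: del_vert X]| <= #|G| by rewrite cardsT card_sig max_card.
nia.
Qed.

Import Order.TTheory GRing.Theory Num.Theory.
Local Open Scope ring_scope.

Lemma ler_expectation (R : numDomainType) (T : finType) (p f : T -> R) (a : R) :
  (forall x, 0 <= p x) -> \sum_x p x = 1 -> (forall x, 0 < p x -> a <= f x) ->
  a <= \sum_x p x * f x.
Proof.
move=> p_ge0 p_sum1 a_le; rewrite -[a]mul1r -p_sum1 mulr_suml; apply: ler_sum => x _.
have := p_ge0 x; rewrite le_eqVlt => /orP [/eqP <-|px_gt0]; first by rewrite !mul0r.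
by rewrite ler_pM2l // a_le.
Qed.

Lemma thin_expectation_le (R : numDomainType) (T : finType) (p : {set T} -> R)
    (w : T -> nat) (eps : R) :
  (forall v : T, \sum_(X : {set T} | v \in X) p X <= eps) ->
  \sum_X p X * (\sum_(v in X) w v)%:R <= eps * (\sum_v w v)%:R.
Proof.
move=> p_thin.
have -> : \sum_X p X * (\sum_(v in X) w v)%:R = \sum_v (w v)%:R * \sum_(X : {set T} | v \in X) p X.
  under eq_bigr do rewrite natr_sum big_distrr /=.
  rewrite (exchange_big_dep xpredT) //=; apply: eq_bigr => v _.
  by rewrite big_distrr /=; apply: eq_bigr => X _; rewrite mulrC.
rewrite natr_sum mulr_sumr; apply: ler_sum => v _.
by rewrite mulrC ler_wpM2r.
Qed.

Lemma degree_sum_thin_tw (R : realType) (G : sgraph) (eps : R) (k m g : nat) :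
  (0 < m)%N -> (m + k + 1 + (m + k + 1 + k + 1) < g)%N -> girth_ge G g ->
  thin_tw_distribution G eps k ->
  (\sum_(v : G) deg v)%:R * m%:R <=
    2 * #|G|%:R * (m%:R + k%:R + 1) + 2 * m%:R * (eps * (\sum_(v : G) deg v)%:R).
Proof.
move=> m_gt0 g_large girth_G [p [p_ge0 [p_sum1 [p_thin p_tw]]]].
pose c := (2 * #|G| * (m + k + 1))%N.
have avg : ((\sum_(v : G) deg v) * m)%:R <=
    \sum_X p X * (c + 2 * (\sum_(v in X) deg v) * m)%:R.
  apply: ler_expectation => // X /p_tw X_tw; rewrite ler_nat.
  exact: degree_sum_del_tw m_gt0 g_large girth_G X_tw.
rewrite -natrM; apply: le_trans avg _.
rewrite (eq_bigr (fun X => p X * c%:R + 2 * m%:R * (p X * (\sum_(v in X) deg v)%:R)));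
  last by move=> X _; rewrite natrD !natrM; ring.
rewrite big_split /= -mulr_suml p_sum1 mul1r -mulr_sumr.
apply: lerD; first by rewrite /c !natrM !natrD.
by apply: ler_wpM2l; [rewrite mulr_ge0 | exact: thin_expectation_le].
Qed.

Lemma degree_bound_absurd (R : realFieldType) (delta n d m k : R) :
  0 < delta -> 0 < n -> 0 <= m -> (2 + delta) * n <= d -> 4 * (k + 1) < delta * m ->
  d * m <= 2 * n * (m + k + 1) + 2 * m * (delta / (4 * (2 + delta)) * d) -> False.
Proof.
move=> delta_gt0 n_gt0 m_ge0 d_ge hm hd.
have c_gt0 : 0 < 2 * (2 + delta) by lra.
have hd' : d * m * (4 + delta) <= 4 * (2 + delta) * n * (m + k + 1).
  move: hd; rewrite -(ler_pM2r c_gt0).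
  have -> : (2 * n * (m + k + 1) + 2 * m * (delta / (4 * (2 + delta)) * d)) * (2 * (2 + delta))
      = 4 * (2 + delta) * n * (m + k + 1) + delta * (d * m) by field; lra.
  lra.
have dm : (2 + delta) * n * (m * (4 + delta)) <= d * (m * (4 + delta)).
  by rewrite ler_wpM2r //; apply: mulr_ge0 => //; lra.
have : (2 + delta) * n * (delta * m - 4 * (k + 1)) <= 0 by lra.
by rewrite pmulr_rle0 ?subr_le0; [lra | apply: mulr_gt0; lra].
Qed.

Theorem proposition42 (R : realType) (delta : R) (hdelta : 0 < delta)
  (C : sgraph -> Prop)
  (hdeg : forall G, C G -> (0 < #|G|)%N /\ 2 + delta <= avg_degree R G)
  (hgirth : forall n : nat, exists G, C G /\ girth_ge G n) :
  ~ frac_tw_fragile R C.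
Proof.
move=> fragile.
have eps_gt0 : 0 < delta / (4 * (2 + delta)) by apply: divr_gt0 => //; lra.
have [k k_thin] := fragile _ eps_gt0.
have [m m_gt0 m_large] : exists2 m : nat, (0 < m)%N & 4 * (k%:R + 1) < delta * m%:R.
  have k_ge0 : 0 <= k%:R :> R := ler0n _ _.
  have bound_ge0 : 0 <= 4 * (k%:R + 1) / delta by apply: divr_ge0; lra.
  exists (Num.Def.archi_bound (4 * (k%:R + 1) / delta)).+1 => //.
  by rewrite [delta * _]mulrC -ltr_pdivrMr // (lt_trans (archi_boundP bound_ge0)) ?ltr_nat.
have [G [CG girth_G]] := hgirth (m + k + 1 + (m + k + 1 + k + 1)).+1.
have [G_gt0 G_avg] := hdeg G CG.
have := degree_sum_thin_tw m_gt0 (ltnSn _) girth_G (k_thin G CG).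
apply: (degree_bound_absurd hdelta _ _ _ m_large).
- by rewrite ltr0n.
- exact: ler0n.
- by move: G_avg; rewrite /avg_degree ler_pdivlMr ?ltr0n.
Qed.
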